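(* Let $\gamma$ be the Euler–Mascheroni constant, $\zeta$ the Riemann zeta function (meromorphically continued) and $\eta(s)=\sum_{n\ge1}(-1)^{n-1}n^{-s}$ the Dirichlet eta function. Define, for large real $x$, $g(x)=\bigl|\ln|\ln\eta(x)|\bigr|$ and $h(x)=\ln|\zeta(\eta(x))|$, and let $g^{n},h^{n}$ denote their $n$-th iterates. Then for every integer $n\ge1$, $$\lim_{x\to\infty}2^{x(\ln2)^{n-1}}\bigl[g^{n}(x)-h^{n}(x)\bigr]=\gamma-\frac12 .$$ *)

From Stdlib Require Import Reals.
From Coquelicot Require Import Coquelicot.
Open Scope R_scope.

(* Euler–Mascheroni constant: lim_{n->oo} (H_n - ln n), with H_n harmonic numbers.
   sum_n f m = f 0 + ... + f m, so the m-th term is H_{m+1} - ln (m+1). *)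
Definition euler_gamma : R :=
  real (Lim_seq (fun m : nat => sum_n (fun k => / INR (k + 1)) m - ln (INR (m + 1)))).

Definition eta (s : R) : R :=
  Series (fun k : nat => (-1) ^ k * Rpower (INR (k + 1)) (- s)).

(* Riemann zeta (analytically continued) at real s > 0, s <> 1, via the
   classical identity zeta(s) = eta(s) / (1 - 2^(1-s)). *)
Definition zeta (s : R) : R := eta s / (1 - Rpower 2 (1 - s)).

Definition g (x : R) : R := Rabs (ln (Rabs (ln (eta x)))).
Definition h (x : R) : R := ln (Rabs (zeta (eta x))).

From Stdlib Require Import Reals Lra Lia Psatz.
From Coquelicot Require Import Coquelicot.
Open Scope R_scope.

(* Put t = 1 - eta y; the alternating series gives t = 2^(-y) (1 + O((2/3)^y)).  Then
   g y = - ln (- ln (1 - t)) = - ln t - t/2 + O(t^2).  Comparing the Dirichlet series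
   eta (1 - s) = (1 - 2^s) zeta (1 - s) with the integral of x^(s-1) shows
   zeta (1 - s) = - 1/s + gamma + o(1) as s -> 0+, so
   h y = ln |zeta (1 - t)| = - ln t - gamma t + o(t) and 2^y (g y - h y) -> gamma - 1/2.
   For the iterates, g y = y ln 2 + o(1) gives g^n x = x (ln 2)^n + o(1), and g is uniformly
   Lipschitz near infinity.  Splitting
   g^(n+1) - h^(n+1) = [g (g^n) - g (h^n)] + [g (h^n) - h (h^n)],
   the first bracket is O(g^n - h^n) = O(2^(-g^(n-1))), which is o(2^(-g^n)) because
   g^(n-1) - g^n -> +oo, while the second is (gamma - 1/2 + o(1)) 2^(-h^n). *)

(** * Elementary estimates *)

Lemma exp_le_exp x y : x <= y -> exp x <= exp y.
Proof. intros [Hlt | ->]; [left; apply exp_increasing|]; lra. Qed.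

Lemma ln_le_sub_1 x : 0 < x -> ln x <= x - 1.
Proof. intros Hx. pose proof (exp_ineq1_le (ln x)). rewrite exp_ln in *; lra. Qed.

Lemma ln_2_lt_1 : ln 2 < 1.
Proof.
  rewrite <- ln_exp. apply ln_increasing; [lra|]. pose proof (exp_ineq1 1). lra.
Qed.

Lemma ln_2_pos : 0 < ln 2.
Proof. pose proof ln_lt_2. lra. Qed.

Lemma Rpower_pos x y : 0 < Rpower x y.
Proof. apply exp_pos. Qed.

Lemma Rpower_1_l y : Rpower 1 y = 1.
Proof. unfold Rpower. rewrite ln_1, Rmult_0_r. apply exp_0. Qed.

Lemma MVT_increment_bounds (f f' : R -> R) a b m M : a <= b ->
  (forall c, a <= c <= b -> derivable_pt_lim f c (f' c)) ->
  (forall c, a <= c <= b -> m <= f' c <= M) ->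
  m * (b - a) <= f b - f a <= M * (b - a).
Proof.
  intros Hab Hd Hb. destruct (Req_dec a b) as [<- | Hne].
  - replace (a - a) with 0 by ring. lra.
  - destruct (MVT_cor2 f f' a b) as [c [-> Hc]]; [lra | exact Hd |].
    specialize (Hb c ltac:(lra)). split; apply Rmult_le_compat_r; lra.
Qed.

Lemma Rabs_exp_sub_le x y : Rabs (exp x - exp y) <= Rabs (x - y) * exp (Rmax x y).
Proof.
  assert (W : forall a b, a <= b -> Rabs (exp a - exp b) <= Rabs (a - b) * exp b).
  { intros a b Hab.
    destruct (MVT_increment_bounds exp exp a b 0 (exp b) Hab) as [H0 H1].
    - intros c _. apply derivable_pt_lim_exp.
    - intros c Hc. split; [left; apply exp_pos | now apply exp_le_exp].
    - rewrite Rabs_minus_sym, (Rabs_minus_sym a), !Rabs_right by lra. lra. }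
  destruct (Rle_dec x y).
  - rewrite Rmax_right by lra. now apply W.
  - rewrite Rmax_left, Rabs_minus_sym, (Rabs_minus_sym x) by lra. apply W. lra.
Qed.

Lemma Rabs_ln_sub_le p q c : 0 < c -> c <= p -> c <= q ->
  Rabs (ln p - ln q) <= Rabs (p - q) / c.
Proof.
  intros Hc.
  assert (W : forall a b, c <= a <= b -> Rabs (ln a - ln b) <= Rabs (a - b) / c).
  { intros a b Hab.
    destruct (MVT_increment_bounds ln Rinv a b 0 (/ c) ltac:(lra)) as [H0 H1].
    - intros t Ht. apply derivable_pt_lim_ln. lra.
    - intros t Ht. split; [left; apply Rinv_0_lt_compat | apply Rinv_le_contravar]; lra.
    - rewrite Rabs_minus_sym, (Rabs_minus_sym a), !Rabs_right by lra. unfold Rdiv. lra. }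
  intros Hp Hq. destruct (Rle_dec p q).
  - apply W. lra.
  - rewrite Rabs_minus_sym, (Rabs_minus_sym p). apply W. lra.
Qed.

Lemma ln_1p_le v : -1 < v -> ln (1 + v) <= v.
Proof. intros Hv. pose proof (ln_le_sub_1 (1 + v)). lra. Qed.

Lemma ln_1p_ge v : -1/2 <= v <= 1/2 -> v - v ^ 2 <= ln (1 + v).
Proof.
  intros Hv. set (F := fun w => ln (1 + w) - w + w ^ 2).
  set (F' := fun w => / (1 + w) - 1 + 2 * w).
  assert (HF : forall c, -1/2 <= c <= 1/2 -> derivable_pt_lim F c (F' c)).
  { intros c Hc. apply is_derive_Reals. unfold F, F'. auto_derive; [lra | field; lra]. }
  assert (F0 : F 0 = 0) by (unfold F; rewrite Rplus_0_r, ln_1; ring).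
  enough (0 <= F v) by (unfold F in *; lra).
  destruct (Rle_dec 0 v).
  - destruct (MVT_increment_bounds F F' 0 v 0 2 ltac:(lra)) as [H _].
    + intros c Hc. apply HF. lra.
    + intros c Hc. unfold F'.
      assert (1 - c <= / (1 + c) <= 1).
      { split; [apply Rmult_le_reg_l with (1 + c); [lra|]; rewrite Rinv_r by lra; nra|].
        rewrite <- Rinv_1. apply Rinv_le_contravar; lra. }
      lra.
    + lra.
  - destruct (MVT_increment_bounds F F' v 0 (-2) 0 ltac:(lra)) as [_ H].
    + intros c Hc. apply HF. lra.
    + intros c Hc. unfold F'.
      assert (0 <= / (1 + c) <= 1 - c + 2 * c ^ 2).
      { split; [left; apply Rinv_0_lt_compat; lra|].
        apply Rmult_le_reg_l with (1 + c); [lra|]. rewrite Rinv_r by lra. nra. }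
      nra.
    + lra.
Qed.

Lemma neg_ln_1m_bounds t : 0 <= t <= 1/2 ->
  t + t ^ 2 / 2 <= - ln (1 - t) <= t + t ^ 2 / 2 + t ^ 3.
Proof.
  intros Ht. split.
  - set (F := fun w => - ln (1 - w) - w - w ^ 2 / 2).
    destruct (MVT_increment_bounds F (fun w => / (1 - w) - 1 - w) 0 t 0 1 ltac:(lra))
      as [H _].
    + intros c Hc. apply is_derive_Reals. unfold F. auto_derive; [lra | field; lra].
    + intros c Hc.
      assert (1 + c <= / (1 - c) <= 2).
      { split; apply Rmult_le_reg_l with (1 - c); try lra; rewrite Rinv_r by lra; nra. }
      lra.
    + unfold F in H. rewrite !Rminus_0_r, ln_1 in H. lra.
  - set (F := fun w => w + w ^ 2 / 2 + w ^ 3 + ln (1 - w)).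
    destruct (MVT_increment_bounds F (fun w => 1 + w + 3 * w ^ 2 - / (1 - w)) 0 t 0 10
                ltac:(lra)) as [H _].
    + intros c Hc. apply is_derive_Reals. unfold F. auto_derive; [lra | field; lra].
    + intros c Hc.
      assert (0 <= / (1 - c) <= 1 + c + 3 * c ^ 2).
      { split; [left; apply Rinv_0_lt_compat; lra|].
        apply Rmult_le_reg_l with (1 - c); [lra|]. rewrite Rinv_r by lra. nra. }
      nra.
    + unfold F in H. rewrite !Rminus_0_r, ln_1 in H. lra.
Qed.

Lemma exp_neg_lin_eventually_lt c eps : 0 < c -> 0 < eps ->
  exists M, forall y, M < y -> exp (- y * c) < eps.
Proof.
  intros Hc He. exists (- ln eps / c). intros y Hy.
  rewrite <- (exp_ln eps) by lra. apply exp_increasing.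
  enough (- ln eps < y * c) by lra.
  apply Rmult_lt_reg_r with (/ c); [apply Rinv_0_lt_compat; lra|].
  replace (y * c * / c) with y by (field; lra). exact Hy.
Qed.

Lemma telescoping_majorant_series (a q : nat -> R) :
  (forall k, 0 <= a k <= q k - q (S k)) -> (forall k, 0 <= q k) ->
  exists l, Un_cv (sum_f_R0 a) l /\
    forall N, sum_f_R0 a N <= l <= sum_f_R0 a N + q (S N).
Proof.
  intros Ha Hq.
  assert (Hgrow : Un_growing (sum_f_R0 a)) by (intros n; simpl; specialize (Ha (S n)); lra).
  assert (Htele : forall N d,
            sum_f_R0 a (N + d) <= sum_f_R0 a N + q (S N) - q (S (N + d))).
  { intros N d. induction d as [|d IH]; [rewrite Nat.add_0_r; lra|].
    rewrite Nat.add_succ_r. simpl. specialize (Ha (S (N + d))). lra. }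
  assert (Hub : forall N m, sum_f_R0 a m <= sum_f_R0 a N + q (S N)).
  { intros N m. destruct (Nat.le_gt_cases m N).
    - pose proof (tech9 _ Hgrow m N H). specialize (Hq (S N)). lra.
    - replace m with (N + (m - N))%nat by lia.
      specialize (Htele N (m - N)%nat). specialize (Hq (S (N + (m - N)))). lra. }
  destruct (growing_cv _ Hgrow) as [l Hl].
  { exists (sum_f_R0 a 0 + q 1%nat). intros x [m ->]. apply Hub. }
  exists l. split; [exact Hl|]. intros N. split; [now apply growing_ineq|].
  apply (Rle_cv_lim (Hub N) Hl).
  apply is_lim_seq_Reals, is_lim_seq_const.
Qed.

(** * The Dirichlet series of eta *)

Definition zeta_term (s : R) (k : nat) : R := Rpower (INR (k + 1)) (- s).

Lemma INR_add_1_ge_1 k : 1 <= INR (k + 1).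
Proof. rewrite plus_INR. pose proof (pos_INR k). simpl. lra. Qed.

Lemma INR_add_1_pos k : 0 < INR (k + 1).
Proof. pose proof (INR_add_1_ge_1 k). lra. Qed.

Lemma zeta_term_pos s k : 0 < zeta_term s k.
Proof. apply Rpower_pos. Qed.

Lemma zeta_term_0 s : zeta_term s 0 = 1.
Proof. unfold zeta_term. simpl. apply Rpower_1_l. Qed.

Lemma zeta_term_1 k : zeta_term 1 k = / INR (k + 1).
Proof. unfold zeta_term. rewrite Rpower_Ropp, Rpower_1 by apply INR_add_1_pos. reflexivity. Qed.

Lemma zeta_term_antitone s1 s2 k : s1 <= s2 -> zeta_term s2 k <= zeta_term s1 k.
Proof. intros Hs. apply Rle_Rpower; [apply INR_add_1_ge_1 | lra]. Qed.

Lemma zeta_term_decreasing s : 0 <= s -> Un_decreasing (zeta_term s).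
Proof.
  intros Hs k. unfold zeta_term. rewrite !Rpower_Ropp.
  apply Rinv_le_contravar; [apply Rpower_pos|].
  apply Rle_Rpower_l; [lra|]. split; [apply INR_add_1_pos | apply le_INR; lia].
Qed.

Lemma zeta_term_cv_0 s : 0 < s -> Un_cv (zeta_term s) 0.
Proof.
  intros Hs. apply is_lim_seq_Reals.
  assert (Hf : is_lim (fun y => exp (- s * ln y)) p_infty 0).
  { eapply is_lim_comp; [apply is_lim_exp_m | | exists 0; intros; discriminate].
    replace m_infty with (Rbar_mult (- s) p_infty).
    - apply is_lim_scal_l, is_lim_ln_p.
    - rewrite Rbar_mult_comm. apply is_Rbar_mult_unique, is_Rbar_mult_p_infty_neg. simpl; lra. }
  unfold zeta_term, Rpower.
  apply (is_lim_comp_seq _ (fun n => INR (n + 1)) p_infty 0 Hf).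
  - exists 0%nat. discriminate.
  - eapply is_lim_seq_ext; [| exact (proj1 (is_lim_seq_incr_1 INR p_infty) is_lim_seq_INR)].
    intros n. now rewrite Nat.add_1_r.
Qed.

Lemma eta_alternating_cv s : 0 < s -> Un_cv (sum_f_R0 (tg_alt (zeta_term s))) (eta s).
Proof.
  intros Hs.
  destruct (alternated_series (zeta_term s) (zeta_term_decreasing s ltac:(lra))
              (zeta_term_cv_0 s Hs)) as [l Hl].
  replace (eta s) with l; [exact Hl|].
  symmetry. apply is_series_unique, is_series_Reals. exact Hl.
Qed.

Lemma eta_two_term_bounds y : 0 < y ->
  1 - Rpower 2 (- y) <= eta y <= 1 - Rpower 2 (- y) + Rpower 3 (- y).
Proof.
  intros Hy.
  assert (Hdec := zeta_term_decreasing y ltac:(lra)). assert (Hcv := zeta_term_cv_0 y Hy).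
  destruct (alternated_series_ineq _ _ 0 Hdec Hcv (eta_alternating_cv y Hy)) as [H1 _].
  destruct (alternated_series_ineq _ _ 1 Hdec Hcv (eta_alternating_cv y Hy)) as [_ H2].
  simpl in H1, H2. unfold tg_alt in H1, H2. rewrite zeta_term_0 in H1, H2.
  replace (zeta_term y 1) with (Rpower 2 (- y)) in H1, H2
    by (unfold zeta_term; f_equal; simpl; ring).
  replace (zeta_term y 2) with (Rpower 3 (- y)) in H2
    by (unfold zeta_term; f_equal; simpl; ring).
  simpl in H1, H2. lra.
Qed.

Lemma zeta_term_2 k : zeta_term 2 k = / INR (k + 1) ^ 2.
Proof.
  unfold zeta_term. rewrite Rpower_Ropp. replace 2 with (INR 2) by (simpl; ring).
  rewrite Rpower_pow by apply INR_add_1_pos. reflexivity.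
Qed.

Lemma series_zeta_term_2 : ex_series (zeta_term 2) /\ Series (zeta_term 2) <= 2.
Proof.
  destruct (telescoping_majorant_series (zeta_term 2) (fun k => 2 * / INR (k + 1)))
    as [l [Hl Hb]].
  - intros k. pose proof (zeta_term_pos 2 k). split; [lra|].
    rewrite zeta_term_2. replace (S k + 1)%nat with (S (k + 1)) by lia. rewrite S_INR.
    pose proof (INR_add_1_ge_1 k). set (x := INR (k + 1)) in *.
    enough (0 <= 2 * / x - 2 * / (x + 1) - / x ^ 2) by lra.
    replace (2 * / x - 2 * / (x + 1) - / x ^ 2) with ((x - 1) / (x ^ 2 * (x + 1)))
      by (field; lra).
    apply Rmult_le_pos; [lra|]. left. apply Rinv_0_lt_compat. nra.
  - intros k. pose proof (INR_add_1_pos k). left. apply Rmult_lt_0_compat; [lra|].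
    now apply Rinv_0_lt_compat.
  - assert (Hs : is_series (zeta_term 2) l) by now apply is_series_Reals.
    split; [now exists l|]. rewrite (is_series_unique _ _ Hs).
    specialize (Hb 0%nat). simpl in Hb. rewrite zeta_term_0 in Hb. simpl in Hb. lra.
Qed.

Lemma zeta_term_sub_le a b k : 4 <= a -> 4 <= b ->
  Rabs (zeta_term a k - zeta_term b k)
  <= 8 * Rabs (a - b) * Rpower 2 (- Rmin a b) * zeta_term 2 k.
Proof.
  intros Ha Hb. set (m := Rmin a b).
  assert (Hm : 4 <= m <= a /\ m <= b)
    by (unfold m; repeat split; [apply Rmin_glb | apply Rmin_l | apply Rmin_r]; lra).
  pose proof (zeta_term_pos 2 k). pose proof (Rabs_pos (a - b)).
  pose proof (Rpower_pos 2 (- m)).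
  destruct k as [|k].
  - rewrite !zeta_term_0, Rminus_eq_0, Rabs_R0.
    apply Rmult_le_pos; [|lra]. apply Rmult_le_pos; lra.
  - set (lam := ln (INR (S k + 1))).
    assert (Hl : ln 2 <= lam).
    { apply ln_le; [lra|]. replace 2 with (INR 2) by (simpl; ring). apply le_INR. lia. }
    pose proof ln_2_pos.
    unfold zeta_term, Rpower. fold lam.
    eapply Rle_trans; [apply Rabs_exp_sub_le|].
    replace (Rmax (- a * lam) (- b * lam)) with (- m * lam)
      by (unfold m, Rmin, Rmax; destruct (Rle_dec a b), (Rle_dec (- a * lam) (- b * lam));
          nra).
    replace (- a * lam - - b * lam) with ((b - a) * lam) by ring.
    rewrite Rabs_mult, (Rabs_right lam), (Rabs_minus_sym b) by lra.
    (* lam e^(-m lam) <= e^(-(m - 3) lam) e^(-2 lam), and lam >= ln 2 since k + 2 >= 2 *)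
    assert (Hexp : lam * exp (- m * lam) <= exp (- (m - 3) * ln 2 + - 2 * lam)).
    { apply Rle_trans with (exp lam * exp (- m * lam)).
      - apply Rmult_le_compat_r; [left; apply exp_pos|].
        pose proof (exp_ineq1_le lam). lra.
      - rewrite <- exp_plus. apply exp_le_exp. nra. }
    replace (exp (- (m - 3) * ln 2 + - 2 * lam)) with (8 * exp (- m * ln 2) * exp (- 2 * lam))
      in Hexp.
    + replace (- (2) * lam) with (-2 * lam) by ring. nra.
    + rewrite exp_plus. f_equal.
      replace (- (m - 3) * ln 2) with (ln (2 * 2 * 2) + - m * ln 2)
        by (rewrite !ln_mult by lra; ring).
      rewrite exp_plus, exp_ln by lra. ring.
Qed.

Lemma eta_lipschitz a b : 4 <= a -> 4 <= b ->
  Rabs (eta a - eta b) <= 16 * Rabs (a - b) * Rpower 2 (- Rmin a b).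
Proof.
  intros Ha Hb. set (C := 8 * Rabs (a - b) * Rpower 2 (- Rmin a b)).
  assert (HC : 0 <= C).
  { unfold C. pose proof (Rabs_pos (a - b)). pose proof (Rpower_pos 2 (- Rmin a b)). nra. }
  destruct series_zeta_term_2 as [Hex Hle].
  assert (Hmaj : forall k, Rabs ((-1) ^ k * zeta_term a k - (-1) ^ k * zeta_term b k)
                           <= C * zeta_term 2 k).
  { intros k. rewrite <- Rmult_minus_distr_l, Rabs_mult, pow_1_abs, Rmult_1_l.
    now apply zeta_term_sub_le. }
  assert (Hexm : ex_series (fun k => C * zeta_term 2 k)).
  { apply (ex_series_ext (fun k => zeta_term 2 k * C)); [intros; apply Rmult_comm|].
    now apply ex_series_scal_r. }
  assert (Habs : ex_series
                   (fun k => Rabs ((-1) ^ k * zeta_term a k - (-1) ^ k * zeta_term b k))).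
  { apply (@ex_series_le R_AbsRing R_CompleteNormedModule) with (2 := Hexm).
    intros k. change norm with Rabs. rewrite Rabs_Rabsolu. apply Hmaj. }
  assert (Heta : forall s, 0 < s -> ex_series (fun k => (-1) ^ k * zeta_term s k)).
  { intros s Hs. exists (eta s). apply is_series_Reals, eta_alternating_cv, Hs. }
  unfold eta. fold zeta_term. rewrite <- Series_minus by (apply Heta; lra).
  eapply Rle_trans; [apply Series_Rabs, Habs|].
  eapply Rle_trans.
  { apply Series_le with (b := fun k => C * zeta_term 2 k); [|exact Hexm].
    intros k. split; [apply Rabs_pos | apply Hmaj]. }
  rewrite Series_scal_l.
  replace (16 * Rabs (a - b) * Rpower 2 (- Rmin a b)) with (C * 2) by (unfold C; ring).
  now apply Rmult_le_compat_l.
Qed.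

(** * zeta near 1 and Euler's constant *)

Definition zeta_gap (sg : R) (k : nat) : R :=
  zeta_term (1 - sg) k - (Rpower (INR (k + 2)) sg - Rpower (INR (k + 1)) sg) / sg.

Definition harmonic_gap (k : nat) : R :=
  / INR (k + 1) - (ln (INR (k + 2)) - ln (INR (k + 1))).

Lemma INR_add_2 k : INR (k + 2) = INR (k + 1) + 1.
Proof. rewrite !plus_INR. simpl. ring. Qed.

Lemma Rpower_increment_bounds sg k : 0 < sg < 1 ->
  zeta_term (1 - sg) (S k)
  <= (Rpower (INR (k + 2)) sg - Rpower (INR (k + 1)) sg) / sg
  <= zeta_term (1 - sg) k.
Proof.
  intros Hs. pose proof (INR_add_1_pos k). pose proof (INR_add_2 k).
  destruct (MVT_increment_bounds (fun x => Rpower x sg / sg) (fun c => Rpower c (- (1 - sg)))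
              (INR (k + 1)) (INR (k + 2)) (zeta_term (1 - sg) (S k)) (zeta_term (1 - sg) k))
    as [Hlo Hhi].
  - lra.
  - intros c Hc. apply is_derive_Reals. unfold Rpower. auto_derive; [lra|].
    replace (- (1 - sg) * ln c) with (sg * ln c + - ln c) by ring.
    rewrite exp_plus, exp_Ropp, exp_ln by lra. field. lra.
  - intros c Hc. unfold zeta_term. replace (S k + 1)%nat with (k + 2)%nat by lia.
    rewrite !Rpower_Ropp.
    split; apply Rinv_le_contravar; try apply Rpower_pos; apply Rle_Rpower_l; lra.
  - replace (INR (k + 2) - INR (k + 1)) with 1 in * by lra.
    unfold Rdiv in *. rewrite Rmult_minus_distr_r. lra.
Qed.

Lemma ln_increment_bounds k :
  / INR (k + 2) <= ln (INR (k + 2)) - ln (INR (k + 1)) <= / INR (k + 1).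
Proof.
  pose proof (INR_add_1_pos k). pose proof (INR_add_2 k).
  destruct (MVT_increment_bounds ln Rinv (INR (k + 1)) (INR (k + 2))
              (/ INR (k + 2)) (/ INR (k + 1))) as [Hlo Hhi].
  - lra.
  - intros c Hc. apply derivable_pt_lim_ln. lra.
  - intros c Hc. split; apply Rinv_le_contravar; lra.
  - replace (INR (k + 2) - INR (k + 1)) with 1 in * by lra. lra.
Qed.

Lemma zeta_gap_bounds sg k : 0 < sg < 1 ->
  0 <= zeta_gap sg k <= zeta_term (1 - sg) k - zeta_term (1 - sg) (S k).
Proof. intros Hs. pose proof (Rpower_increment_bounds sg k Hs). unfold zeta_gap. lra. Qed.

Lemma harmonic_gap_bounds k : 0 <= harmonic_gap k <= zeta_term 1 k - zeta_term 1 (S k).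
Proof.
  pose proof (ln_increment_bounds k). unfold harmonic_gap. rewrite !zeta_term_1.
  replace (S k + 1)%nat with (k + 2)%nat by lia. lra.
Qed.

(* Halving the even terms of the alternating series: 2^sg (k+1)^(sg-1) = 2 (2k+2)^(sg-1). *)
Lemma alternating_partial_sum_split sg M : 0 < sg < 1 ->
  sum_f_R0 (tg_alt (zeta_term (1 - sg))) (2 * M + 1)
  = sum_f_R0 (zeta_term (1 - sg)) (2 * M + 1) - Rpower 2 sg * sum_f_R0 (zeta_term (1 - sg)) M.
Proof.
  intros Hs.
  assert (Hdouble : forall k, Rpower 2 sg * zeta_term (1 - sg) k
                              = 2 * zeta_term (1 - sg) (2 * k + 1)).
  { intros k. unfold zeta_term.
    replace (INR (2 * k + 1 + 1)) with (2 * INR (k + 1))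
      by (rewrite !plus_INR, mult_INR; simpl; ring).
    rewrite <- Rpower_mult_distr by (try lra; apply INR_add_1_pos).
    replace sg with (1 + - (1 - sg)) at 1 by ring. rewrite Rpower_plus, Rpower_1 by lra. ring. }
  induction M as [|M IH].
  - simpl. unfold tg_alt. simpl. specialize (Hdouble 0%nat). simpl in Hdouble.
    rewrite zeta_term_0 in *. lra.
  - replace (2 * S M + 1)%nat with (S (S (2 * M + 1))) by lia.
    rewrite !tech5, IH. unfold tg_alt.
    replace (S (2 * M + 1)) with (2 * (M + 1))%nat by lia.
    rewrite pow_1_even, pow_1_odd.
    replace (S (2 * (M + 1))) with (2 * S M + 1)%nat by lia.
    specialize (Hdouble (S M)). lra.
Qed.

Lemma zeta_term_partial_sum sg M : 0 < sg ->
  sum_f_R0 (zeta_term (1 - sg)) M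
  = sum_f_R0 (zeta_gap sg) M + (Rpower (INR (M + 2)) sg - 1) / sg.
Proof.
  intros Hs. induction M as [|M IH].
  - simpl sum_f_R0. unfold zeta_gap. replace (INR (0 + 1)) with 1 by (simpl; ring).
    rewrite Rpower_1_l. ring.
  - rewrite !tech5, IH. unfold zeta_gap.
    replace (S M + 1)%nat with (M + 2)%nat by lia. field. lra.
Qed.

Lemma filterlim_mul_add_eventually a b : (0 < a)%nat ->
  filterlim (fun n => a * n + b)%nat eventually eventually.
Proof. intros Ha P [N HN]. exists N. intros n Hn. apply HN. nia. Qed.

Lemma alternating_partial_sum_gap sg M : 0 < sg < 1 ->
  sum_f_R0 (tg_alt (zeta_term (1 - sg))) (2 * M + 1)
  = sum_f_R0 (zeta_gap sg) (2 * M + 1) - Rpower 2 sg * sum_f_R0 (zeta_gap sg) M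
    - (1 - Rpower 2 sg) / sg
    - (Rpower (INR (2 * M + 2 + 2)) sg - Rpower (INR (2 * M + 2 + 1)) sg) / sg.
Proof.
  intros Hs. rewrite alternating_partial_sum_split, !zeta_term_partial_sum by lra.
  replace (2 * M + 1 + 2)%nat with (2 * M + 2 + 1)%nat by lia.
  replace (INR (2 * M + 2 + 2)) with (2 * INR (M + 2))
    by (rewrite !plus_INR, mult_INR; simpl; ring).
  rewrite <- Rpower_mult_distr by (try lra; rewrite INR_add_2; pose proof (INR_add_1_pos M); lra).
  field. lra.
Qed.

Lemma eta_one_sub sg l : 0 < sg < 1 -> Un_cv (sum_f_R0 (zeta_gap sg)) l ->
  eta (1 - sg) = (1 - Rpower 2 sg) * (l - / sg).
Proof.
  intros Hs Hl. apply is_lim_seq_Reals in Hl.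
  set (G := sum_f_R0 (zeta_gap sg)) in *.
  set (e := fun M => (Rpower (INR (2 * M + 2 + 2)) sg - Rpower (INR (2 * M + 2 + 1)) sg) / sg).
  assert (He : is_lim_seq e 0).
  { apply is_lim_seq_le_le with (u := fun _ => 0) (w := fun M => zeta_term (1 - sg) (2 * M + 2)).
    - intros M. pose proof (Rpower_increment_bounds sg (2 * M + 2) Hs).
      pose proof (zeta_term_pos (1 - sg) (S (2 * M + 2))). unfold e. lra.
    - apply is_lim_seq_const.
    - apply (is_lim_seq_subseq (zeta_term (1 - sg)) 0 (fun M => 2 * M + 2)%nat).
      + apply filterlim_mul_add_eventually. lia.
      + apply is_lim_seq_Reals, zeta_term_cv_0. lra. }
  assert (Hodd : is_lim_seq (fun M => sum_f_R0 (tg_alt (zeta_term (1 - sg))) (2 * M + 1))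
                   (eta (1 - sg))).
  { apply (is_lim_seq_subseq _ _ (fun M => 2 * M + 1)%nat).
    - apply filterlim_mul_add_eventually. lia.
    - apply is_lim_seq_Reals, eta_alternating_cv. lra. }
  assert (Hlim : is_lim_seq (fun M => sum_f_R0 (tg_alt (zeta_term (1 - sg))) (2 * M + 1))
                   (l - Rpower 2 sg * l - (1 - Rpower 2 sg) / sg - 0)).
  { eapply is_lim_seq_ext; [intros M; symmetry; apply alternating_partial_sum_gap, Hs|].
    apply is_lim_seq_minus'; [|exact He].
    apply is_lim_seq_minus'; [|apply is_lim_seq_const].
    apply is_lim_seq_minus'; [|apply (is_lim_seq_scal_l _ (Rpower 2 sg) l), Hl].
    apply (is_lim_seq_subseq G l (fun M => 2 * M + 1)%nat); [|exact Hl].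
    apply filterlim_mul_add_eventually. lia. }
  apply is_lim_seq_unique in Hodd, Hlim. rewrite Hodd in Hlim. injection Hlim as ->.
  field. lra.
Qed.

Lemma zeta_one_sub sg l : 0 < sg < 1 -> Un_cv (sum_f_R0 (zeta_gap sg)) l ->
  zeta (1 - sg) = l - / sg.
Proof.
  intros Hs Hl. unfold zeta. rewrite (eta_one_sub sg l Hs Hl).
  replace (1 - (1 - sg)) with sg by ring.
  assert (1 < Rpower 2 sg) by (rewrite <- (Rpower_O 2) by lra; apply Rpower_lt; lra).
  field. lra.
Qed.

(* [zeta_gap sg k = Phi sg / sg] with [Phi 0 = 0] and [Phi' 0 = harmonic_gap k]. *)
Lemma zeta_gap_near_0 k eps : 0 < eps -> exists del, 0 < del /\
  forall sg, 0 < sg < del -> Rabs (zeta_gap sg k - harmonic_gap k) < eps.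
Proof.
  intros He. pose proof (INR_add_1_pos k). pose proof (INR_add_2 k).
  set (Phi := fun t => t * Rpower (INR (k + 1)) (t - 1)
                       - (Rpower (INR (k + 2)) t - Rpower (INR (k + 1)) t)).
  assert (HPhi : derivable_pt_lim Phi 0 (harmonic_gap k)).
  { apply is_derive_Reals. unfold Phi, Rpower, harmonic_gap. auto_derive; [lra|].
    replace ((0 + - (1)) * ln (INR (k + 1))) with (- ln (INR (k + 1))) by ring.
    rewrite !Rmult_0_l, exp_0, exp_Ropp, exp_ln by lra. ring. }
  destruct (HPhi eps He) as [del Hdel].
  exists del. split; [apply cond_pos|]. intros sg Hs.
  specialize (Hdel sg ltac:(lra) ltac:(rewrite Rabs_right; lra)).
  replace (zeta_gap sg k) with ((Phi (0 + sg) - Phi 0) / sg); [exact Hdel|].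
  unfold Phi, zeta_gap, zeta_term. rewrite Rplus_0_l, !Rpower_O by lra.
  replace (- (1 - sg)) with (sg - 1) by ring. field. lra.
Qed.

Lemma zeta_gap_sum_near_0 N eps : 0 < eps -> exists del, 0 < del /\
  forall sg, 0 < sg < del ->
  Rabs (sum_f_R0 (zeta_gap sg) N - sum_f_R0 harmonic_gap N) < eps.
Proof.
  revert eps. induction N as [|N IH]; intros eps He; [exact (zeta_gap_near_0 0 eps He)|].
  destruct (IH (eps / 2) ltac:(lra)) as [d1 [Hd1 H1]].
  destruct (zeta_gap_near_0 (S N) (eps / 2) ltac:(lra)) as [d2 [Hd2 H2]].
  exists (Rmin d1 d2). split; [now apply Rmin_glb_lt|]. intros sg Hs.
  pose proof (Rmin_l d1 d2). pose proof (Rmin_r d1 d2).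
  specialize (H1 sg ltac:(lra)). specialize (H2 sg ltac:(lra)).
  rewrite !tech5.
  set (a := sum_f_R0 (zeta_gap sg) N) in *. set (b := sum_f_R0 harmonic_gap N) in *.
  replace (a + zeta_gap sg (S N) - (b + harmonic_gap (S N)))
    with ((a - b) + (zeta_gap sg (S N) - harmonic_gap (S N))) by ring.
  eapply Rle_lt_trans; [apply Rabs_triang | lra].
Qed.

Lemma harmonic_gap_partial_sum m :
  sum_f_R0 harmonic_gap m = sum_f_R0 (fun k => / INR (k + 1)) m - ln (INR (m + 2)).
Proof.
  induction m as [|m IH].
  - simpl. unfold harmonic_gap. simpl. rewrite ln_1. ring.
  - rewrite !tech5, IH. unfold harmonic_gap. replace (S m + 1)%nat with (m + 2)%nat by lia. ring.
Qed.

Lemma euler_gamma_harmonic_gap l : Un_cv (sum_f_R0 harmonic_gap) l -> euler_gamma = l.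
Proof.
  intros Hl. unfold euler_gamma. replace l with (real (Finite l)) by reflexivity. f_equal.
  apply is_lim_seq_unique.
  apply (is_lim_seq_ext (fun m => sum_f_R0 harmonic_gap m + (ln (INR (m + 2)) - ln (INR (m + 1))))).
  { intros m. rewrite harmonic_gap_partial_sum, sum_n_Reals. ring. }
  replace (Finite l) with (Finite (l + 0)) by (f_equal; ring).
  apply is_lim_seq_plus'; [now apply is_lim_seq_Reals|].
  apply is_lim_seq_le_le with (u := fun _ => 0) (w := zeta_term 1).
  - intros m. pose proof (ln_increment_bounds m). rewrite zeta_term_1.
    assert (0 < / INR (m + 2)).
    { apply Rinv_0_lt_compat. rewrite INR_add_2. pose proof (INR_add_1_pos m). lra. }
    lra.
  - apply is_lim_seq_const.
  - apply is_lim_seq_Reals, zeta_term_cv_0. lra.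
Qed.

Lemma zeta_gap_series sg : 0 < sg < 1 -> exists l, Un_cv (sum_f_R0 (zeta_gap sg)) l /\
  forall N, sum_f_R0 (zeta_gap sg) N <= l <= sum_f_R0 (zeta_gap sg) N + zeta_term (1 - sg) (S N).
Proof.
  intros Hs. apply telescoping_majorant_series.
  - intros k. now apply zeta_gap_bounds.
  - intros k. left. apply zeta_term_pos.
Qed.

Lemma zeta_add_inv_near_euler_gamma eps : 0 < eps -> exists del, 0 < del /\
  forall sg, 0 < sg < del -> Rabs (zeta (1 - sg) + / sg - euler_gamma) < eps.
Proof.
  intros He.
  destruct (telescoping_majorant_series harmonic_gap (zeta_term 1)) as [g1 [Hg1 Hb1]];
    [apply harmonic_gap_bounds | intros; left; apply zeta_term_pos |].
  rewrite (euler_gamma_harmonic_gap g1 Hg1).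
  (* both tails beyond N are below (N + 2)^(-1/2) as soon as sg <= 1/2 *)
  destruct (zeta_term_cv_0 (1 / 2) ltac:(lra) (eps / 3) ltac:(lra)) as [N HN].
  specialize (HN (S N) ltac:(lia)). unfold R_dist in HN.
  rewrite Rminus_0_r, Rabs_right in HN by (left; apply zeta_term_pos).
  destruct (zeta_gap_sum_near_0 N (eps / 3) ltac:(lra)) as [del [Hdel Hc]].
  exists (Rmin del (1 / 2)). split; [apply Rmin_glb_lt; lra|]. intros sg Hs.
  pose proof (Rmin_l del (1 / 2)). pose proof (Rmin_r del (1 / 2)).
  destruct (zeta_gap_series sg ltac:(lra)) as [l [Hl Hb]].
  rewrite (zeta_one_sub sg l ltac:(lra) Hl). replace (l - / sg + / sg) with l by (field; lra).
  specialize (Hc sg ltac:(lra)). specialize (Hb N). specialize (Hb1 N).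
  pose proof (zeta_term_antitone (1 / 2) (1 - sg) (S N) ltac:(lra)).
  pose proof (zeta_term_antitone (1 / 2) 1 (S N) ltac:(lra)).
  apply Rabs_lt_between in Hc. apply Rabs_lt_between. lra.
Qed.

Lemma zeta_add_inv_bounds sg : 0 < sg < 1 -> 0 <= zeta (1 - sg) + / sg <= 1.
Proof.
  intros Hs. destruct (zeta_gap_series sg Hs) as [l [Hl Hb]].
  rewrite (zeta_one_sub sg l Hs Hl). replace (l - / sg + / sg) with l by (field; lra).
  specialize (Hb 0%nat). pose proof (zeta_gap_bounds sg 0 Hs).
  simpl sum_f_R0 in Hb. rewrite zeta_term_0 in *. lra.
Qed.

(** * Asymptotics of g and h *)

Definition eta_defect (y : R) : R := 1 - eta y.

Definition zeta_regular_part (y : R) : R := zeta (eta y) + / eta_defect y.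

Lemma Rpower_3_neg y : Rpower 3 (- y) = Rpower (2 / 3) y * Rpower 2 (- y).
Proof. unfold Rpower. rewrite <- exp_plus, ln_div by lra. f_equal. ring. Qed.

Lemma Rpower_2_neg_le y : 4 <= y -> Rpower 2 (- y) <= 1 / 16.
Proof.
  intros Hy. apply Rle_trans with (Rpower 2 (- INR 4)).
  - apply Rle_Rpower; [lra|]. simpl. lra.
  - rewrite Rpower_Ropp, Rpower_pow by lra. simpl. lra.
Qed.

Lemma Rpower_2_3_le y : 2 <= y -> Rpower (2 / 3) y <= 1 / 2.
Proof.
  intros Hy. apply Rle_trans with (Rpower (2 / 3) (INR 2)).
  - unfold Rpower. apply exp_le_exp.
    assert (ln (2 / 3) < 0) by (rewrite <- ln_1; apply ln_increasing; lra).
    simpl. nra.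
  - rewrite Rpower_pow by lra. simpl. lra.
Qed.

Lemma eta_defect_bounds y : 4 <= y ->
  Rpower 2 (- y) * (1 - Rpower (2 / 3) y) <= eta_defect y <= Rpower 2 (- y).
Proof.
  intros Hy. pose proof (eta_two_term_bounds y ltac:(lra)). rewrite Rpower_3_neg in H.
  unfold eta_defect. lra.
Qed.

Lemma eta_defect_small y : 4 <= y ->
  0 < eta_defect y <= 1 / 16 /\ Rpower 2 (- y) / 2 <= eta_defect y.
Proof.
  intros Hy. pose proof (eta_defect_bounds y Hy). pose proof (Rpower_2_neg_le y Hy).
  pose proof (Rpower_pos 2 (- y)). pose proof (Rpower_2_3_le y ltac:(lra)).
  split; [split|]; nra.
Qed.

Lemma neg_ln_eta_bounds y : 4 <= y ->
  eta_defect y + eta_defect y ^ 2 / 2 <= - ln (eta y)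
  <= eta_defect y + eta_defect y ^ 2 / 2 + eta_defect y ^ 3.
Proof.
  intros Hy. destruct (eta_defect_small y Hy) as [Ht _].
  replace (eta y) with (1 - eta_defect y) by (unfold eta_defect; ring).
  apply neg_ln_1m_bounds. lra.
Qed.

Lemma g_eq y : 4 <= y -> g y = - ln (- ln (eta y)).
Proof.
  intros Hy. pose proof (neg_ln_eta_bounds y Hy) as HL. destruct (eta_defect_small y Hy) as [Ht _].
  set (t := eta_defect y) in *.
  unfold g. rewrite (Rabs_left (ln (eta y))), Rabs_left; [reflexivity| |].
  - rewrite <- ln_1. apply ln_increasing; nra.
  - rewrite <- ln_1. apply ln_increasing; unfold t, eta_defect in *; lra.
Qed.

Lemma zeta_regular_part_bounds y : 4 <= y -> 0 <= zeta_regular_part y <= 1.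
Proof.
  intros Hy. destruct (eta_defect_small y Hy) as [Ht _].
  unfold zeta_regular_part. replace (eta y) with (1 - eta_defect y) by (unfold eta_defect; ring).
  apply zeta_add_inv_bounds. lra.
Qed.

Lemma h_eq y : 4 <= y ->
  h y = - ln (eta_defect y) + ln (1 - eta_defect y * zeta_regular_part y).
Proof.
  intros Hy. destruct (eta_defect_small y Hy) as [Ht _]. pose proof (zeta_regular_part_bounds y Hy).
  set (t := eta_defect y) in *. set (D := zeta_regular_part y) in *.
  assert (Hz : zeta (eta y) = - (/ t * (1 - t * D)))
    by (unfold D, zeta_regular_part; fold t; field; lra).
  assert (0 < / t) by (apply Rinv_0_lt_compat; lra).
  assert (0 < 1 - t * D) by nra.
  unfold h. rewrite Hz, Rabs_Ropp, Rabs_right by (apply Rle_ge, Rmult_le_pos; lra).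
  rewrite ln_mult, ln_Rinv by nra. ring.
Qed.

(* With t = eta_defect y and D = zeta_regular_part y,
   g - h = - ln (1 + v) - ln (1 - t D) where v = - ln (eta y) / t - 1 ~ t / 2. *)
Lemma g_sub_h_expansion y : 4 <= y ->
  Rabs (g y - h y - eta_defect y * (zeta_regular_part y - 1 / 2)) <= 2 * eta_defect y ^ 2.
Proof.
  intros Hy. rewrite g_eq, h_eq by lra.
  destruct (eta_defect_small y Hy) as [Ht _]. pose proof (zeta_regular_part_bounds y Hy).
  pose proof (neg_ln_eta_bounds y Hy) as HL.
  set (t := eta_defect y) in *. set (D := zeta_regular_part y) in *. set (L := - ln (eta y)) in *.
  set (v := L / t - 1).
  assert (Hv : t / 2 <= v <= t / 2 + t ^ 2).
  { assert (Hit : t * / t = 1) by (field; lra).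
    assert (0 < / t) by (apply Rinv_0_lt_compat; lra).
    unfold v, Rdiv. split; nra. }
  assert (EL : ln L = ln t + ln (1 + v)).
  { rewrite <- ln_mult by (try lra; unfold v; nra). f_equal. unfold v. field. lra. }
  pose proof (ln_1p_le v ltac:(nra)). pose proof (ln_1p_ge v ltac:(nra)).
  pose proof (ln_1p_le (- (t * D)) ltac:(nra)). pose proof (ln_1p_ge (- (t * D)) ltac:(nra)).
  replace (1 + - (t * D)) with (1 - t * D) in * by ring.
  assert (v ^ 2 <= t ^ 2) by nra.
  assert ((- (t * D)) ^ 2 <= t ^ 2).
  { replace ((- (t * D)) ^ 2) with (t ^ 2 * (D * D)) by ring.
    assert (D * D <= 1) by nra. assert (0 <= t ^ 2) by nra. nra. }
  rewrite EL. apply Rabs_le. split; lra.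
Qed.

Lemma g_sub_h_error_bound y : 4 <= y ->
  Rabs (Rpower 2 y * (g y - h y) - (euler_gamma - 1 / 2))
  <= Rpower (2 / 3) y + Rabs (zeta_regular_part y - euler_gamma) + 2 * eta_defect y.
Proof.
  intros Hy. pose proof (g_sub_h_expansion y Hy) as Hexp.
  pose proof (eta_defect_bounds y Hy) as Ht. pose proof (zeta_regular_part_bounds y Hy).
  pose proof (Rpower_pos 2 (- y)). pose proof (Rpower_pos (2 / 3) y).
  rewrite <- (Ropp_involutive y) at 1. rewrite Rpower_Ropp.
  set (t := eta_defect y) in *. set (D := zeta_regular_part y) in *.
  set (E := Rpower 2 (- y)) in *. set (r := Rpower (2 / 3) y) in *.
  set (err := g y - h y - t * (D - 1 / 2)) in *.
  assert (0 < / E) by (apply Rinv_0_lt_compat; lra).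
  assert (E * / E = 1) by (field; lra).
  assert (Hratio : Rabs (t / E - 1) <= r).
  { apply Rabs_le. unfold Rdiv. split; [|nra].
    apply Rle_trans with (E * (1 - r) * / E - 1); [right; field; lra | nra]. }
  assert (Herr : Rabs (err / E) <= 2 * t).
  { unfold Rdiv. rewrite Rabs_mult, Rabs_inv, (Rabs_right E) by lra.
    apply Rmult_le_reg_r with E; [lra|]. rewrite Rmult_assoc, Rinv_l, Rmult_1_r by lra.
    assert (0 < t) by (pose proof (eta_defect_small y Hy); unfold t; lra). nra. }
  replace (/ E * (g y - h y) - (euler_gamma - 1 / 2))
    with ((t / E - 1) * (D - 1 / 2) + (D - euler_gamma) + err / E) by (unfold err; field; lra).
  assert (Rabs ((t / E - 1) * (D - 1 / 2)) <= r).
  { rewrite Rabs_mult. assert (Rabs (D - 1 / 2) <= 1) by (apply Rabs_le; lra).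
    pose proof (Rabs_pos (t / E - 1)). pose proof (Rabs_pos (D - 1 / 2)). nra. }
  eapply Rle_trans; [apply Rabs_triang|].
  eapply Rle_trans; [apply Rplus_le_compat_r, Rabs_triang|]. lra.
Qed.

Lemma Rpower_2_neg_eventually_lt eps : 0 < eps ->
  exists M, forall y, M < y -> Rpower 2 (- y) < eps.
Proof. intros He. apply exp_neg_lin_eventually_lt; [apply ln_2_pos | exact He]. Qed.

Lemma Rpower_2_3_eventually_lt eps : 0 < eps ->
  exists M, forall y, M < y -> Rpower (2 / 3) y < eps.
Proof.
  intros He. destruct (exp_neg_lin_eventually_lt (- ln (2 / 3)) eps) as [M HM]; [|exact He|].
  - enough (ln (2 / 3) < 0) by lra. rewrite <- ln_1. apply ln_increasing; lra.
  - exists M. intros y Hy. unfold Rpower.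
    replace (y * ln (2 / 3)) with (- y * - ln (2 / 3)) by ring. now apply HM.
Qed.

Lemma is_lim_g_sub_h : is_lim (fun y => Rpower 2 y * (g y - h y)) p_infty (euler_gamma - 1 / 2).
Proof.
  apply is_lim_spec. intros [eps He]. simpl.
  destruct (zeta_add_inv_near_euler_gamma (eps / 3) ltac:(lra)) as [del [Hd Hz]].
  destruct (Rpower_2_neg_eventually_lt (Rmin del (eps / 6)) ltac:(apply Rmin_glb_lt; lra))
    as [M1 H1].
  destruct (Rpower_2_3_eventually_lt (eps / 3) ltac:(lra)) as [M2 H2].
  exists (Rmax 4 (Rmax M1 M2)). intros y Hy.
  pose proof (Rmax_l 4 (Rmax M1 M2)). pose proof (Rmax_r 4 (Rmax M1 M2)).
  pose proof (Rmax_l M1 M2). pose proof (Rmax_r M1 M2).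
  specialize (H1 y ltac:(lra)). specialize (H2 y ltac:(lra)).
  pose proof (Rmin_l del (eps / 6)). pose proof (Rmin_r del (eps / 6)).
  destruct (eta_defect_small y ltac:(lra)) as [Ht _]. pose proof (eta_defect_bounds y ltac:(lra)).
  specialize (Hz (eta_defect y) ltac:(lra)).
  replace (1 - eta_defect y) with (eta y) in Hz by (unfold eta_defect; ring).
  eapply Rle_lt_trans; [apply g_sub_h_error_bound; lra|]. unfold zeta_regular_part. lra.
Qed.

Lemma g_sub_lin_bound y : 4 <= y ->
  Rabs (g y - y * ln 2) <= 2 * (Rpower (2 / 3) y + eta_defect y).
Proof.
  intros Hy. rewrite g_eq by lra.
  destruct (eta_defect_small y Hy) as [Ht _]. pose proof (eta_defect_bounds y Hy) as HT.
  pose proof (neg_ln_eta_bounds y Hy) as HL. pose proof (Rpower_pos 2 (- y)).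
  pose proof (Rpower_pos (2 / 3) y). pose proof (Rpower_2_3_le y ltac:(lra)).
  replace (y * ln 2) with (- ln (Rpower 2 (- y))) by (rewrite ln_Rpower; ring).
  set (t := eta_defect y) in *. set (E := Rpower 2 (- y)) in *. set (L := - ln (eta y)) in *.
  set (r := Rpower (2 / 3) y) in *.
  assert (0 < / E) by (apply Rinv_0_lt_compat; lra).
  assert (E * / E = 1) by (field; lra).
  assert (Hq : 1 - r <= L / E <= 1 + t).
  { unfold Rdiv. split; [nra|]. assert (L <= t * (1 + t)) by nra. nra. }
  replace (- ln L - - ln E) with (- (ln (L / E) - ln 1)) by (rewrite ln_1, ln_div by nra; ring).
  rewrite Rabs_Ropp. eapply Rle_trans; [apply (Rabs_ln_sub_le _ _ (1 / 2)); lra|].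
  assert (Rabs (L / E - 1) <= r + t) by (apply Rabs_le; lra). lra.
Qed.

Lemma is_lim_g_sub_lin : is_lim (fun y => g y - y * ln 2) p_infty 0.
Proof.
  apply is_lim_spec. intros [eps He]. simpl.
  destruct (Rpower_2_neg_eventually_lt (eps / 4) ltac:(lra)) as [M1 H1].
  destruct (Rpower_2_3_eventually_lt (eps / 4) ltac:(lra)) as [M2 H2].
  exists (Rmax 4 (Rmax M1 M2)). intros y Hy.
  pose proof (Rmax_l 4 (Rmax M1 M2)). pose proof (Rmax_r 4 (Rmax M1 M2)).
  pose proof (Rmax_l M1 M2). pose proof (Rmax_r M1 M2).
  specialize (H1 y ltac:(lra)). specialize (H2 y ltac:(lra)).
  pose proof (eta_defect_bounds y ltac:(lra)). pose proof (g_sub_lin_bound y ltac:(lra)).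
  rewrite Rminus_0_r. lra.
Qed.

Lemma g_lipschitz a b : 5 <= a -> 5 <= b -> Rabs (a - b) <= 1 ->
  Rabs (g a - g b) <= 70 * Rabs (a - b).
Proof.
  intros Ha Hb Hab. rewrite !g_eq by lra.
  set (m := Rmin a b).
  assert (Hm : m <= a <= m + 1 /\ m <= b <= m + 1).
  { apply Rabs_le_between in Hab. unfold m, Rmin. destruct Rle_dec; lra. }
  set (E := Rpower 2 (- (m + 1))).
  assert (HE : 0 < E) by apply Rpower_pos.
  assert (Hlow : forall y, 5 <= y <= m + 1 -> E / 2 <= - ln (eta y)).
  { intros y Hy. destruct (eta_defect_small y ltac:(lra)) as [Ht Ht'].
    pose proof (neg_ln_eta_bounds y ltac:(lra)).
    assert (E <= Rpower 2 (- y)) by (apply Rle_Rpower; lra). nra. }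
  assert (Heta : forall y, 5 <= y -> 15 / 16 <= eta y).
  { intros y Hy. destruct (eta_defect_small y ltac:(lra)) as [Ht _]. unfold eta_defect in Ht. lra. }
  assert (HL : Rabs (- ln (eta a) - - ln (eta b)) <= Rabs (eta a - eta b) * (16 / 15)).
  { replace (- ln (eta a) - - ln (eta b)) with (ln (eta b) - ln (eta a)) by ring.
    rewrite Rabs_minus_sym.
    eapply Rle_trans; [apply (Rabs_ln_sub_le _ _ (15 / 16)); [lra | apply Heta; lra..]|].
    right. field. }
  pose proof (eta_lipschitz a b ltac:(lra) ltac:(lra)) as He. fold m in He.
  replace (Rpower 2 (- m)) with (2 * E) in He
    by (unfold E; rewrite Ropp_plus_distr, Rpower_plus, (Rpower_Ropp 2 1), Rpower_1 by lra; field;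
        apply Rgt_not_eq, Rpower_pos).
  replace (- ln (- ln (eta a)) - - ln (- ln (eta b))) with (ln (- ln (eta b)) - ln (- ln (eta a)))
    by ring.
  rewrite Rabs_minus_sym.
  eapply Rle_trans; [apply (Rabs_ln_sub_le _ _ (E / 2)); [lra | apply Hlow; lra..]|].
  apply Rle_trans with (16 * Rabs (a - b) * (2 * E) * (16 / 15) / (E / 2)).
  - unfold Rdiv. apply Rmult_le_compat_r; [left; apply Rinv_0_lt_compat; lra|].
    pose proof (Rabs_pos (eta a - eta b)). nra.
  - replace (16 * Rabs (a - b) * (2 * E) * (16 / 15) / (E / 2)) with (1024 / 15 * Rabs (a - b))
      by (field; lra).
    pose proof (Rabs_pos (a - b)). lra.
Qed.

(** * Limits at infinity and the iterates *)

Lemma is_lim_mult' (f1 f2 : R -> R) x (a b : R) :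
  is_lim f1 x a -> is_lim f2 x b -> is_lim (fun y => f1 y * f2 y) x (a * b).
Proof. intros H1 H2. now apply (is_lim_mult f1 f2 x a b). Qed.

Lemma is_lim_comp_p_infty (f u : R -> R) l :
  is_lim f p_infty l -> is_lim u p_infty p_infty -> is_lim (fun x => f (u x)) p_infty l.
Proof. intros Hf Hu. apply (is_lim_comp f u p_infty l p_infty Hf Hu). exists 0. discriminate. Qed.

Lemma is_lim_0_of_Rabs_le (f b : R -> R) :
  Rbar_locally' p_infty (fun x => Rabs (f x) <= b x) -> is_lim b p_infty 0 ->
  is_lim f p_infty 0.
Proof.
  intros [M HM] Hb. apply (is_lim_le_le_loc (fun x => - b x) b).
  - exists M. intros x Hx. now apply Rabs_le_between, HM.
  - replace (Finite 0) with (Rbar_opp 0) by (simpl; f_equal; ring). now apply is_lim_opp.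
  - exact Hb.
Qed.

Lemma is_lim_p_infty_of_sub_lin (f : R -> R) c : 0 < c ->
  is_lim (fun x => f x - c * x) p_infty 0 -> is_lim f p_infty p_infty.
Proof.
  intros Hc Hf. apply (is_lim_ext (fun x => (f x - c * x) + c * x)); [intros; ring|].
  eapply is_lim_plus; [exact Hf | apply is_lim_scal_l, is_lim_id|].
  simpl. destruct Rle_dec as [|Hn]; [|lra]. destruct Rle_lt_or_eq_dec; [constructor | lra].
Qed.

Lemma is_lim_Rpower_2_0 (d : R -> R) :
  is_lim d p_infty 0 -> is_lim (fun x => Rpower 2 (d x)) p_infty 1.
Proof.
  intros Hd. rewrite <- (Rpower_O 2) by lra.
  apply (is_lim_comp_continuous d (fun y => Rpower 2 y)); [exact Hd|].
  apply (@ex_derive_continuous R_AbsRing R_NormedModule). unfold Rpower. auto_derive. auto.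
Qed.

Lemma is_lim_Rpower_2_neg (z : R -> R) :
  is_lim z p_infty p_infty -> is_lim (fun x => Rpower 2 (- z x)) p_infty 0.
Proof.
  intros Hz. apply (is_lim_comp_p_infty (fun y => Rpower 2 (- y))); [|exact Hz].
  apply is_lim_spec. intros [eps He]. destruct (Rpower_2_neg_eventually_lt eps He) as [M HM].
  exists M. intros y Hy. simpl. rewrite Rminus_0_r, Rabs_right by (left; apply Rpower_pos).
  now apply HM.
Qed.

Lemma is_lim_iter_g_sub_lin k : is_lim (fun x => Nat.iter k g x - ln 2 ^ k * x) p_infty 0.
Proof.
  induction k as [|k IH].
  - apply (is_lim_ext (fun _ => 0)); [intros x; simpl; ring | apply is_lim_const].
  - assert (Hk : is_lim (Nat.iter k g) p_infty p_infty).
    { apply (is_lim_p_infty_of_sub_lin _ (ln 2 ^ k)); [apply pow_lt, ln_2_pos | exact IH]. }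
    apply (is_lim_ext (fun x => (g (Nat.iter k g x) - Nat.iter k g x * ln 2)
                                + ln 2 * (Nat.iter k g x - ln 2 ^ k * x))).
    { intros x. simpl. ring. }
    replace (Finite 0) with (Finite (0 + ln 2 * 0)) by (f_equal; ring).
    apply is_lim_plus'.
    + exact (is_lim_comp_p_infty _ _ 0 is_lim_g_sub_lin Hk).
    + exact (is_lim_scal_l _ (ln 2) p_infty 0 IH).
Qed.

Lemma is_lim_iter_g k : is_lim (Nat.iter k g) p_infty p_infty.
Proof.
  apply (is_lim_p_infty_of_sub_lin _ (ln 2 ^ k)); [apply pow_lt, ln_2_pos|].
  apply is_lim_iter_g_sub_lin.
Qed.

(* Since ln 2 < 1, each application of g shrinks large arguments by an unbounded amount. *)
Lemma is_lim_iter_g_sub_succ k :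
  is_lim (fun x => Nat.iter k g x - Nat.iter (S k) g x) p_infty p_infty.
Proof.
  apply (is_lim_ext (fun x => (1 - ln 2) * Nat.iter k g x
                              - (g (Nat.iter k g x) - Nat.iter k g x * ln 2))).
  { intros x. simpl. ring. }
  eapply is_lim_minus.
  - apply is_lim_scal_l, is_lim_iter_g.
  - exact (is_lim_comp_p_infty _ _ 0 is_lim_g_sub_lin (is_lim_iter_g k)).
  - simpl. destruct Rle_dec as [|Hn]; [|pose proof ln_2_lt_1; lra].
    destruct Rle_lt_or_eq_dec as [|He]; [constructor | pose proof ln_2_lt_1; lra].
Qed.

Lemma g_lipschitz_eventually (G H : R -> R) :
  is_lim G p_infty p_infty -> is_lim H p_infty p_infty ->
  is_lim (fun x => G x - H x) p_infty 0 ->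
  Rbar_locally' p_infty (fun x => Rabs (g (G x) - g (H x)) <= 70 * Rabs (G x - H x)).
Proof.
  intros HG HH HD. apply is_lim_spec in HG, HH, HD.
  destruct (HG 5) as [M1 H1]. destruct (HH 5) as [M2 H2].
  destruct (HD (mkposreal 1 Rlt_0_1)) as [M3 H3].
  exists (Rmax M1 (Rmax M2 M3)). intros x Hx.
  pose proof (Rmax_l M1 (Rmax M2 M3)). pose proof (Rmax_r M1 (Rmax M2 M3)).
  pose proof (Rmax_l M2 M3). pose proof (Rmax_r M2 M3).
  specialize (H1 x ltac:(lra)). specialize (H2 x ltac:(lra)). specialize (H3 x ltac:(lra)).
  simpl in H3. rewrite Rminus_0_r in H3.
  apply g_lipschitz; lra.
Qed.

Lemma is_lim_g_sub_h_transport (w G H : R -> R) (c : R) :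
  is_lim G p_infty p_infty ->
  is_lim (fun x => w x - G x) p_infty p_infty ->
  is_lim (fun x => Rpower 2 (w x) * (G x - H x)) p_infty c ->
  is_lim (fun x => Rpower 2 (G x) * (g (G x) - h (H x))) p_infty (euler_gamma - 1 / 2).
Proof.
  intros HG Hgap HQ. set (Q := fun x => Rpower 2 (w x) * (G x - H x)) in *.
  assert (Hw : is_lim w p_infty p_infty).
  { apply (is_lim_ext (fun x => (w x - G x) + G x)); [intros; ring|].
    eapply is_lim_plus; [exact Hgap | exact HG | constructor]. }
  assert (HD : is_lim (fun x => G x - H x) p_infty 0).
  { apply (is_lim_ext (fun x => Rpower 2 (- w x) * Q x)).
    { intros x. unfold Q. rewrite <- Rmult_assoc, <- Rpower_plus.
      replace (- w x + w x) with 0 by ring. rewrite Rpower_O by lra. ring. }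
    replace (Finite 0) with (Finite (0 * c)) by (f_equal; ring).
    apply is_lim_mult'; [apply is_lim_Rpower_2_neg, Hw | exact HQ]. }
  assert (HH : is_lim H p_infty p_infty).
  { apply (is_lim_ext (fun x => G x - (G x - H x))); [intros; ring|].
    eapply is_lim_minus; [exact HG | exact HD | constructor]. }
  (* 2^G |g G - g H| <= 70 2^G |G - H| = 70 2^(G - w) |Q| *)
  assert (HT1 : is_lim (fun x => Rpower 2 (G x) * (g (G x) - g (H x))) p_infty 0).
  { apply (is_lim_0_of_Rabs_le _ (fun x => 70 * (Rpower 2 (- (w x - G x)) * Rabs (Q x)))).
    - destruct (g_lipschitz_eventually G H HG HH HD) as [M HM]. exists M. intros x Hx.
      replace (Rpower 2 (- (w x - G x)) * Rabs (Q x)) with (Rpower 2 (G x) * Rabs (G x - H x)).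
      + rewrite Rabs_mult, Rabs_right by (left; apply Rpower_pos).
        specialize (HM x Hx). pose proof (Rpower_pos 2 (G x)). nra.
      + unfold Q. rewrite Rabs_mult, (Rabs_right (Rpower 2 (w x))) by (left; apply Rpower_pos).
        rewrite <- Rmult_assoc, <- Rpower_plus. do 2 f_equal. ring.
    - replace (Finite 0) with (Rbar_mult 70 (0 * Rabs c)) by (simpl; f_equal; ring).
      apply is_lim_scal_l, is_lim_mult'; [apply is_lim_Rpower_2_neg, Hgap|].
      apply (is_lim_Rabs Q p_infty c), HQ. }
  assert (HT2 : is_lim (fun x => Rpower 2 (G x - H x) * (Rpower 2 (H x) * (g (H x) - h (H x))))
                  p_infty (1 * (euler_gamma - 1 / 2))).
  { apply is_lim_mult'; [apply is_lim_Rpower_2_0, HD|].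
    exact (is_lim_comp_p_infty _ _ _ is_lim_g_sub_h HH). }
  apply (is_lim_ext (fun x => Rpower 2 (G x) * (g (G x) - g (H x))
                              + Rpower 2 (G x - H x) * (Rpower 2 (H x) * (g (H x) - h (H x))))).
  { intros x. rewrite <- Rmult_assoc, <- Rpower_plus. replace (G x - H x + H x) with (G x) by ring.
    ring. }
  replace (euler_gamma - 1 / 2) with (0 + 1 * (euler_gamma - 1 / 2)) by ring.
  now apply is_lim_plus'.
Qed.

Lemma is_lim_iter_g_sub_iter_h k :
  is_lim (fun x => Rpower 2 (Nat.iter k g x) * (Nat.iter (S k) g x - Nat.iter (S k) h x))
    p_infty (euler_gamma - 1 / 2).
Proof.
  induction k as [|k IH]; [exact is_lim_g_sub_h|].
  exact (is_lim_g_sub_h_transport _ _ _ _ (is_lim_iter_g (S k)) (is_lim_iter_g_sub_succ k) IH).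
Qed.

Theorem mainTheorem10 (n : nat) (hn : (1 <= n)%nat) :
  is_lim
    (fun x : R => Rpower 2 (x * ln 2 ^ (n - 1)) * (Nat.iter n g x - Nat.iter n h x))
    p_infty (euler_gamma - 1 / 2).
Proof.
  destruct n as [|k]; [lia|]. replace (S k - 1)%nat with k by lia.
  apply (is_lim_ext (fun x => Rpower 2 (- (Nat.iter k g x - ln 2 ^ k * x))
           * (Rpower 2 (Nat.iter k g x) * (Nat.iter (S k) g x - Nat.iter (S k) h x)))).
  { intros x. rewrite <- Rmult_assoc, <- Rpower_plus. do 2 f_equal. ring. }
  replace (euler_gamma - 1 / 2) with (1 * (euler_gamma - 1 / 2)) by ring.
  apply is_lim_mult'; [|apply is_lim_iter_g_sub_iter_h].
  apply is_lim_Rpower_2_0.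
  replace (Finite 0) with (Rbar_opp 0) by (simpl; f_equal; ring).
  apply is_lim_opp, is_lim_iter_g_sub_lin.
Qed.
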